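(* (Sufficient condition for negative transfer.) Let $\eta_i\ge0$ with $\sum\eta_i<\infty$, let $N_A,N_B>0$ be arbitrary, and suppose $E_B:=\sum_iE_{B,i}>0$. If $\rho<\sqrt{\gamma_A}/(1+\sqrt{\gamma_A})$, then \[ E_{A\to B}(\rho):=\sum_i\Big[2(1-\rho)(1-q_{A,i})+\frac{q_{A,i}^2}{1-\gamma_A}\Big]E_{B,i}\;>\;E_B . \] Indeed each mode satisfies $2(1-\rho)(1-q)+q^2/(1-\gamma_A)>1$ for all real $q$ under this condition.
   Context: For sample size $N$: $\kappa>0$ solves $1=\sum_i\eta_i/(\kappa+N\eta_i)$, $\gamma=\sum_iN\eta_i^2/(\kappa+N\eta_i)^2$, $q_i=\kappa/(\kappa+N\eta_i)$; subscripts $A,B$ denote $N=N_A,N_B$. $E_{B,i}=q_{B,i}^2\eta_i^2/(1-\gamma_B)$. $E_{A\to B}(\rho)$ is the (replica-method) generalization error on task B after sequential training A→B with target similarity $\rho$, and $E_B$ the single-task error on B. *)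

From Stdlib Require Import Reals.
From Coquelicot Require Import Coquelicot.
Open Scope R_scope.

Definition kappa_eq (eta : nat -> R) (N kappa : R) : Prop :=
  0 < kappa /\ is_series (fun i => eta i / (kappa + N * eta i)) 1.

Definition gammaN (eta : nat -> R) (N kappa : R) : R :=
  Series (fun i => N * (eta i)^2 / (kappa + N * eta i)^2).

Definition qN (eta : nat -> R) (N kappa : R) (i : nat) : R :=
  kappa / (kappa + N * eta i).

Definition EBi (eta : nat -> R) (NB kB : R) (i : nat) : R :=
  (qN eta NB kB i)^2 * (eta i)^2 / (1 - gammaN eta NB kB).

Definition mode_factor (rho gA q : R) : R :=
  2 * (1 - rho) * (1 - q) + q^2 / (1 - gA).

Definition EAtoB (eta : nat -> R) (NA kA NB kB rho : R) : R :=
  Series (fun i => mode_factor rho (gammaN eta NA kA) (qN eta NA kA i)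
                   * EBi eta NB kB i).

From Stdlib Require Import Reals Lra Psatz Classical.
From Coquelicot Require Import Coquelicot.
Open Scope R_scope.

(* For [0 <= g < 1] and [s = sqrt g] one has the sum-of-squares identity
     (1 - g) (mode_factor rho g q - 1)
       = (q - (1 - rho)(1 - g))^2 + (1 - g) ((1 - rho)^2 s^2 - rho^2),
   and [rho < s / (1 + s)] says exactly [rho < (1 - rho) s], so every mode
   factor exceeds 1 when [rho >= 0].  For [rho < 0] and [q <= 1] the factor only
   grows as [rho] decreases, and the case [rho = 0] applies because the kappa
   equation forces some [eta_i > 0], hence [0 < gamma_A < 1].  As all [q_{A,i}]
   lie in [0, 1] and the [E_{B,i}] are nonnegative and not all zero, the
   weighted sum strictly exceeds [E_B]. *)

Lemma Series_const0 : Series (fun _ => 0) = 0.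
Proof.
  transitivity (Series (fun n => 0 * (fun _ => 1) n)).
  - apply Series_ext; intro; ring.
  - rewrite Series_scal_l; ring.
Qed.

Lemma Series_neq0_exists (a : nat -> R) : Series a <> 0 -> exists i, a i <> 0.
Proof.
  intro Ha; apply NNPP; intro Hnone; apply Ha.
  rewrite <- Series_const0; apply Series_ext; intro n.
  apply NNPP; intro Hn; apply Hnone; now exists n.
Qed.

Lemma sum_f_R0_ge_last (a : nat -> R) (n : nat) :
  (forall k, 0 <= a k) -> a n <= sum_f_R0 a n.
Proof.
  intro Ha; destruct n as [|n]; simpl; [lra|].
  pose proof (cond_pos_sum a n Ha); lra.
Qed.

Lemma Series_gt0 (a : nat -> R) (i : nat) :
  (forall n, 0 <= a n) -> 0 < a i -> ex_series a -> 0 < Series a.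
Proof.
  intros Ha Hai Hex.
  rewrite (Series_incr_n a (S i)) by (lia || assumption); simpl Init.Nat.pred.
  assert (Htail : 0 <= Series (fun k => a (S i + k)%nat)).
  { rewrite <- Series_const0; apply Series_le.
    - intro k; split; [lra | apply Ha].
    - now apply (ex_series_incr_n a (S i)). }
  pose proof (sum_f_R0_ge_last a i Ha); lra.
Qed.

Lemma Series_lt_Series (a b : nat -> R) (i : nat) :
  (forall n, a n <= b n) -> a i < b i -> ex_series a -> ex_series b ->
  Series a < Series b.
Proof.
  intros Hab Hi Ea Eb.
  assert (Hd : 0 < Series (fun n => b n - a n)).
  { apply (Series_gt0 _ i).
    - intro n; specialize (Hab n); lra.
    - lra.
    - exact (ex_series_minus b a Eb Ea). }
  rewrite Series_minus in Hd by assumption; lra.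
Qed.

Lemma ex_series_le_nonneg (a b : nat -> R) :
  (forall n, 0 <= a n <= b n) -> ex_series b -> ex_series a.
Proof.
  intros Hab Eb; apply (ex_series_le a b); [|exact Eb].
  intro n; change (Rabs (a n) <= b n); rewrite Rabs_pos_eq; apply Hab.
Qed.

Lemma lt_one_sub_mul_of_lt_div (rho s : R) :
  0 <= s -> rho < s / (1 + s) -> rho < (1 - rho) * s.
Proof.
  intros Hs H.
  apply (Rmult_lt_compat_r (1 + s)) in H; [|lra].
  replace (s / (1 + s) * (1 + s)) with s in H by (field; lra); lra.
Qed.

Lemma mode_factor_gt1_nonneg (rho g q : R) :
  0 <= g < 1 -> 0 <= rho -> rho < sqrt g / (1 + sqrt g) ->
  mode_factor rho g q > 1.
Proof.
  intros Hg Hrho Hlt.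
  pose proof (sqrt_pos g) as Hs.
  pose proof (lt_one_sub_mul_of_lt_div rho (sqrt g) Hs Hlt) as Hlt'.
  set (s := sqrt g) in *.
  assert (Hss : s * s = g) by (apply sqrt_sqrt; lra).
  assert (Hsos : (1 - g) * (mode_factor rho g q - 1)
    = (q - (1 - rho) * (1 - g)) ^ 2
      + (1 - g) * (((1 - rho) * s - rho) * ((1 - rho) * s + rho))).
  { unfold mode_factor; rewrite <- Hss; field; rewrite Hss; lra. }
  assert (Hpos : 0 < (1 - g) * (((1 - rho) * s - rho) * ((1 - rho) * s + rho))).
  { apply Rmult_lt_0_compat; [lra|]; apply Rmult_lt_0_compat; lra. }
  pose proof (pow2_ge_0 (q - (1 - rho) * (1 - g))).
  assert (0 < (1 - g) * (mode_factor rho g q - 1)) by lra.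
  assert (0 < mode_factor rho g q - 1) by (apply (Rmult_lt_reg_l (1 - g)); lra).
  lra.
Qed.

Lemma mode_factor_antitone_rho (rho1 rho2 g q : R) :
  q <= 1 -> rho1 <= rho2 -> mode_factor rho2 g q <= mode_factor rho1 g q.
Proof. intros; unfold mode_factor; nra. Qed.

Lemma mode_factor_gt1 (rho g q : R) :
  0 < g < 1 -> q <= 1 -> rho < sqrt g / (1 + sqrt g) ->
  mode_factor rho g q > 1.
Proof.
  intros Hg Hq Hlt.
  destruct (Rle_or_lt 0 rho) as [Hrho | Hrho].
  - apply mode_factor_gt1_nonneg; lra.
  - apply Rlt_le_trans with (mode_factor 0 g q).
    + apply mode_factor_gt1_nonneg; [lra | lra |].
      pose proof (sqrt_lt_R0 g (proj1 Hg)).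
      apply Rdiv_lt_0_compat; lra.
    + apply mode_factor_antitone_rho; lra.
Qed.

Lemma mode_factor_le (rho g q : R) :
  g < 1 -> 0 <= q <= 1 -> mode_factor rho g q <= 2 * Rabs (1 - rho) + / (1 - g).
Proof.
  intros Hg Hq; unfold mode_factor.
  pose proof (Rle_abs (1 - rho)); pose proof (Rabs_pos (1 - rho)).
  assert (Hinv : 0 < / (1 - g)) by (apply Rinv_0_lt_compat; lra).
  assert (q ^ 2 / (1 - g) <= / (1 - g)).
  { unfold Rdiv; rewrite <- (Rmult_1_l (/ (1 - g))) at 2.
    apply Rmult_le_compat_r; nra. }
  nra.
Qed.

Section Spectrum.

Variables (eta : nat -> R) (N kappa : R).
Hypothesis eta_ge0 : forall i, 0 <= eta i.
Hypothesis N_gt0 : 0 < N.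
Hypothesis kappa_solves : kappa_eq eta N kappa.

Let kappa_term i := eta i / (kappa + N * eta i).
Let gamma_term i := N * eta i ^ 2 / (kappa + N * eta i) ^ 2.

Lemma kappa_gt0 : 0 < kappa.
Proof. exact (proj1 kappa_solves). Qed.

Lemma denom_gt0 (i : nat) : 0 < kappa + N * eta i.
Proof. pose proof kappa_gt0; pose proof (eta_ge0 i); nra. Qed.

Lemma qN_bounds (i : nat) : 0 <= qN eta N kappa i <= 1.
Proof.
  pose proof kappa_gt0; pose proof (denom_gt0 i); pose proof (eta_ge0 i).
  unfold qN; split.
  - apply Rdiv_le_0_compat; lra.
  - apply (Rmult_le_reg_r (kappa + N * eta i)); [lra|].
    unfold Rdiv; rewrite Rmult_assoc, Rinv_l; nra.
Qed.

Lemma kappa_term_sub_gamma_term (i : nat) :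
  kappa_term i - gamma_term i = kappa * eta i / (kappa + N * eta i) ^ 2.
Proof. pose proof (denom_gt0 i); unfold kappa_term, gamma_term; field; lra. Qed.

Lemma gamma_term_bounds (i : nat) : 0 <= gamma_term i <= kappa_term i.
Proof.
  pose proof kappa_gt0; pose proof (denom_gt0 i); pose proof (eta_ge0 i).
  pose proof (kappa_term_sub_gamma_term i).
  assert (0 <= kappa * eta i / (kappa + N * eta i) ^ 2)
    by (apply Rdiv_le_0_compat; [nra | apply pow_lt; lra]).
  split; [unfold gamma_term; apply Rdiv_le_0_compat; [nra | apply pow_lt; lra] | lra].
Qed.

Lemma eta_gt0_exists : exists i, 0 < eta i.
Proof.
  assert (Hsum : Series kappa_term = 1)
    by exact (is_series_unique _ _ (proj2 kappa_solves)).
  destruct (Series_neq0_exists kappa_term) as [i Hi]; [lra|].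
  exists i; destruct (eta_ge0 i) as [|H0]; [assumption|].
  exfalso; apply Hi; unfold kappa_term; rewrite <- H0; unfold Rdiv; ring.
Qed.

Lemma ex_series_gamma_term : ex_series gamma_term.
Proof.
  apply (ex_series_le_nonneg _ kappa_term gamma_term_bounds).
  exists 1; exact (proj2 kappa_solves).
Qed.

Lemma gammaN_bounds : 0 < gammaN eta N kappa < 1.
Proof.
  destruct eta_gt0_exists as [i Hi].
  pose proof kappa_gt0; pose proof (denom_gt0 i).
  change (0 < Series gamma_term < 1).
  split.
  - apply (Series_gt0 _ i); [apply gamma_term_bounds | | apply ex_series_gamma_term].
    unfold gamma_term; apply Rdiv_lt_0_compat.
    + apply Rmult_lt_0_compat; [lra | apply pow_lt; lra].
    + apply pow_lt; lra.
  - rewrite <- (is_series_unique kappa_term 1 (proj2 kappa_solves)).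
    apply (Series_lt_Series _ _ i).
    + apply gamma_term_bounds.
    + pose proof (kappa_term_sub_gamma_term i).
      assert (0 < kappa * eta i / (kappa + N * eta i) ^ 2)
        by (apply Rdiv_lt_0_compat; [apply Rmult_lt_0_compat | apply pow_lt]; lra).
      lra.
    + apply ex_series_gamma_term.
    + exists 1; exact (proj2 kappa_solves).
Qed.

Lemma EBi_scaled_gamma_term (i : nat) :
  EBi eta N kappa i = kappa ^ 2 / N / (1 - gammaN eta N kappa) * gamma_term i.
Proof.
  pose proof (denom_gt0 i); pose proof gammaN_bounds.
  unfold EBi, qN, gamma_term; field; lra.
Qed.

Lemma EBi_ge0 (i : nat) : 0 <= EBi eta N kappa i.
Proof.
  pose proof gammaN_bounds; pose proof (gamma_term_bounds i).
  rewrite EBi_scaled_gamma_term.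
  apply Rmult_le_pos; [|lra].
  apply Rdiv_le_0_compat; [apply Rdiv_le_0_compat|]; nra.
Qed.

Lemma ex_series_EBi : ex_series (EBi eta N kappa).
Proof.
  apply (ex_series_ext (fun i => kappa ^ 2 / N / (1 - gammaN eta N kappa) * gamma_term i)).
  - intro i; symmetry; apply EBi_scaled_gamma_term.
  - exact (ex_series_scal_l _ _ ex_series_gamma_term).
Qed.

End Spectrum.

Theorem mainTheorem5 (eta : nat -> R) (NA NB kA kB rho : R) :
  (forall i, 0 <= eta i) ->
  ex_series eta ->
  0 < NA -> 0 < NB ->
  kappa_eq eta NA kA ->
  kappa_eq eta NB kB ->
  0 < Series (EBi eta NB kB) ->
  rho < sqrt (gammaN eta NA kA) / (1 + sqrt (gammaN eta NA kA)) ->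
  ex_series (fun i => mode_factor rho (gammaN eta NA kA) (qN eta NA kA i)
                      * EBi eta NB kB i)
  /\ EAtoB eta NA kA NB kB rho > Series (EBi eta NB kB)
  /\ (0 <= rho -> forall q : R, mode_factor rho (gammaN eta NA kA) q > 1).
Proof.
  (* Summability of [eta] is implied by the kappa equation. *)
  intros Heta _ HNA HNB KA KB HEB Hrho.
  pose proof (gammaN_bounds eta NA kA Heta HNA KA) as HgA.
  set (f i := mode_factor rho (gammaN eta NA kA) (qN eta NA kA i)).
  set (E := EBi eta NB kB).
  assert (HE : forall i, 0 <= E i) by exact (EBi_ge0 eta NB kB Heta HNB KB).
  assert (Hf : forall i, 1 < f i <= 2 * Rabs (1 - rho) + / (1 - gammaN eta NA kA)).
  { intro i; pose proof (qN_bounds eta NA kA Heta HNA KA i).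
    split; [apply mode_factor_gt1 | apply mode_factor_le]; lra. }
  assert (Hsum : ex_series (fun i => f i * E i)).
  { apply (ex_series_le_nonneg _ (fun i => (2 * Rabs (1 - rho) + / (1 - gammaN eta NA kA)) * E i)).
    - intro i; specialize (Hf i); specialize (HE i); split; nra.
    - exact (ex_series_scal_l _ _ (ex_series_EBi eta NB kB Heta HNB KB)). }
  split; [exact Hsum | split].
  - destruct (Series_neq0_exists E) as [i Hi]; [unfold E; lra|].
    change (Series E < Series (fun i => f i * E i)).
    apply (Series_lt_Series E _ i).
    + intro n; specialize (Hf n); specialize (HE n); nra.
    + specialize (Hf i); specialize (HE i); nra.
    + exact (ex_series_EBi eta NB kB Heta HNB KB).
    + exact Hsum.
  - intros Hrho0 q; apply mode_factor_gt1_nonneg; lra.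
Qed.
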